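(* Let $\mathcal{M}=(W,E,V)$ be a playable coalition model, $w\in W$, $C\subseteq N$, and $s\in\{0,1\}^2$. Then the fiber $(\nu^w_C)^{-1}(s)=\{X\subseteq W\mid\nu^w_C(X)=s\}$ is order-convex in $(\mathcal{P}(W),\subseteq)$, i.e. whenever $X\subseteq Y\subseteq Z$ and $X,Z$ belong to it, so does $Y$.
   Context: $N$ is a finite set of agents. A coalition model is $\mathcal{M}=(W,E,V)$ with $W$ nonempty and $E_w(C)\subseteq\mathcal{P}(W)$ for each $w\in W$, $C\subseteq N$. Write $\overline{X}=W\setminus X$. $E_w$ is playable if for all $C,D\subseteq N$, $X,Y\subseteq W$: (i) $\emptyset\notin E_w(C)$; (ii) $W\in E_w(C)$; (iii) if $X\in E_w(C)$ and $X\subseteq Y$ then $Y\in E_w(C)$; (iv) if $C\cap D=\emptyset$, $X\in E_w(C)$, $Y\in E_w(D)$ then $X\cap Y\in E_w(C\cup D)$; (v) $X\notin E_w(\emptyset)$ iff $\overline{X}\in E_w(N)$; the model is playable if each $E_w$ is. The strategic value is $\nu^w_C(X)=(a,b)\in\{0,1\}^2$ with $a=1$ iff $X\in E_w(C)$, $b=1$ iff $\overline{X}\in E_w(C)$ (the four values $(1,1),(1,0),(0,1),(0,0)$ are called $\mathrm{FC},\mathrm{PD},\mathrm{AD},\mathrm{FI}$). *)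

From Stdlib Require Import ClassicalEpsilon.
From mathcomp Require Import all_boot.
Set Implicit Arguments.
Unset Strict Implicit.
Unset Printing Implicit Defensive.

Definition wset (W : Type) := W -> Prop.
Definition wsubset (W : Type) (X Y : wset W) : Prop := forall x, X x -> Y x.
Definition wcompl (W : Type) (X : wset W) : wset W := fun x => ~ X x.
Definition wempty (W : Type) : wset W := fun _ => False.
Definition wfull (W : Type) : wset W := fun _ => True.
Definition wcap (W : Type) (X Y : wset W) : wset W := fun x => X x /\ Y x.

Record coalition_model (N : finType) (Atom : Type) := CoalitionModel {
  cm_W : Type;
  cm_W_nonempty : inhabited cm_W;
  cm_E : cm_W -> {set N} -> wset cm_W -> Prop;
  cm_V : Atom -> wset cm_W
}.

Definition playable_at (N : finType) (Atom : Type) (M : coalition_model N Atom)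
    (w : cm_W M) : Prop :=
  let E := @cm_E N Atom M w in
  (forall C, ~ E C (@wempty (cm_W M))) /\
  (forall C, E C (@wfull (cm_W M))) /\
  (forall C X Y, E C X -> wsubset X Y -> E C Y) /\
  (forall (C D : {set N}) X Y, [disjoint C & D] -> E C X -> E D Y -> E (C :|: D) (wcap X Y)) /\
  (forall X, ~ E set0 X <-> E setT (wcompl X)).

Definition playable (N : finType) (Atom : Type) (M : coalition_model N Atom) : Prop :=
  forall w : cm_W M, @playable_at N Atom M w.

Definition bool_of (P : Prop) : bool :=
  if excluded_middle_informative P then true else false.

Definition nu (N : finType) (Atom : Type) (M : coalition_model N Atom)
    (w : cm_W M) (C : {set N}) (X : wset (cm_W M)) : bool * bool :=
  (bool_of (@cm_E N Atom M w C X), bool_of (@cm_E N Atom M w C (wcompl X))).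

Arguments nu {N Atom} M w C X.
Arguments playable_at {N Atom} M w.
Arguments playable {N Atom} M.

From mathcomp Require Import all_boot.
From Stdlib Require Import ClassicalEpsilon.

(* Only outcome monotonicity is needed: the first component of [nu M w C] is
   increasing and the second decreasing in X, and the fibres of a monotone
   truth value are order-convex. *)

Lemma bool_of_between {P Q R : Prop} {b : bool} :
  (P -> Q) -> (Q -> R) -> bool_of P = b -> bool_of R = b -> bool_of Q = b.
Proof.
rewrite /bool_of => PQ QR.
case: (excluded_middle_informative P) => hP;
case: (excluded_middle_informative Q) => hQ;
case: (excluded_middle_informative R) => hR //; try by move=> <-.
all: exfalso; tauto.
Qed.

Lemma wsubset_compl (W : Type) (X Y : wset W) :
  wsubset X Y -> wsubset (wcompl Y) (wcompl X).
Proof. by move=> XY x nYx Xx; apply/nYx/XY. Qed.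

Lemma playable_at_monotone {N : finType} {Atom : Type}
    {M : coalition_model N Atom} {w : cm_W M} (C : {set N})
    (X Y : wset (cm_W M)) :
  playable_at M w -> wsubset X Y -> cm_E w C X -> cm_E w C Y.
Proof. by case=> _ [_ [mono _]] XY EX; apply: mono EX XY. Qed.

Theorem mainTheorem10 (N : finType) (Atom : Type) (M : coalition_model N Atom)
  (HM : playable M) (w : cm_W M) (C : {set N}) (s : bool * bool)
  (X Y Z : wset (cm_W M)) :
  wsubset X Y -> wsubset Y Z -> nu M w C X = s -> nu M w C Z = s ->
  nu M w C Y = s.
Proof.
move=> XY YZ; case: s => a b; rewrite /nu => -[EXa EXb] [EZa EZb].
have mono := playable_at_monotone C _ _ (HM w).
congr pair.
- by apply: (bool_of_between _ _ EXa EZa); apply: mono.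
- by apply: (bool_of_between _ _ EZb EXb); apply/mono/wsubset_compl.
Qed.
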